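(* Let $0<\zeta\le1$, place a spike at the origin, and let $s^1,s^2,s^3$ be its three nearest samples for some sampling grid of spacing $\zeta$ (any relative position). Let $W^1,W^2$ be the corresponding wave functions. Then for $i=1,2$ and all $t\in\mathbb{R}^2$ with $\|t\|\ge10$, the absolute values of $W^i(t)$ and of each of its first and second partial derivatives at $t$ are bounded by $$g(t)=\frac{6\|t\|^2}{\zeta}\exp\!\Big(-\frac{\|t\|^2}{2}+\sqrt2\,\zeta\|t\|\Big),$$ and if moreover $10^{-2}\le\zeta\le1$ then $g(t)<2\cdot10^{-9}$ for all such $t$.
   Context: $K(t)=\exp(-\|t\|^2/2)$. The three nearest samples of a spike $t_0$: three vertices of a grid square of side $\zeta$ forming a right isosceles triangle with axis-parallel legs of length $\zeta$ that contains $t_0$. The waves of spike $t_0$ are the unique functions $W^i(u)=\kappa_iK(s^1-u)+\mu_iK(s^2-u)+\rho_iK(s^3-u)$ with $W^1(t_0)=0,\partial_xW^1(t_0)=1,\partial_yW^1(t_0)=0$ and $W^2(t_0)=0,\partial_xW^2(t_0)=0,\partial_yW^2(t_0)=1$; derivatives are with respect to $u$. *)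

From Stdlib Require Import Reals Lra.
Open Scope R_scope.

Definition K (x y : R) : R := exp (- (x ^ 2 + y ^ 2) / 2).

Definition norm2 (x y : R) : R := sqrt (x ^ 2 + y ^ 2).

(* Right isosceles triangle with right-angle vertex c, horizontal neighbour h
   and vertical neighbour v, legs of length z (three vertices of a grid square
   of side z). *)
Definition right_tri (z : R) (c h v : R * R) : Prop :=
  exists s1 s2 : R, (s1 = 1 \/ s1 = -1) /\ (s2 = 1 \/ s2 = -1) /\
    h = (fst c + s1 * z, snd c) /\ v = (fst c, snd c + s2 * z).

Definition in_triangle (p a b c : R * R) : Prop :=
  exists l1 l2 l3 : R, 0 <= l1 /\ 0 <= l2 /\ 0 <= l3 /\ l1 + l2 + l3 = 1 /\
    fst p = l1 * fst a + l2 * fst b + l3 * fst c /\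
    snd p = l1 * snd a + l2 * snd b + l3 * snd c.

Definition nearest_samples (z : R) (t0 s1 s2 s3 : R * R) : Prop :=
  (right_tri z s1 s2 s3 \/ right_tri z s1 s3 s2 \/ right_tri z s2 s1 s3 \/
   right_tri z s2 s3 s1 \/ right_tri z s3 s1 s2 \/ right_tri z s3 s2 s1) /\
  in_triangle t0 s1 s2 s3.

Definition wave (s1 s2 s3 : R * R) (a b c : R) (x y : R) : R :=
  a * K (fst s1 - x) (snd s1 - y) + b * K (fst s2 - x) (snd s2 - y)
  + c * K (fst s3 - x) (snd s3 - y).

Definition dx_is (f : R -> R -> R) (x y l : R) : Prop :=
  derivable_pt_lim (fun a => f a y) x l.
Definition dy_is (f : R -> R -> R) (x y l : R) : Prop :=
  derivable_pt_lim (fun b => f x b) y l.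

Definition wave_conds (f : R -> R -> R) (vx vy : R) : Prop :=
  f 0 0 = 0 /\ dx_is f 0 0 vx /\ dy_is f 0 0 vy.

Definition bounded_C2_at (f : R -> R -> R) (x y B : R) : Prop :=
  Rabs (f x y) <= B /\
  (forall l, dx_is f x y l -> Rabs l <= B) /\
  (forall l, dy_is f x y l -> Rabs l <= B) /\
  (forall D : R -> R -> R, (forall a b, dx_is f a b (D a b)) ->
     (forall l, dx_is D x y l -> Rabs l <= B) /\
     (forall l, dy_is D x y l -> Rabs l <= B)) /\
  (forall E : R -> R -> R, (forall a b, dy_is f a b (E a b)) ->
     (forall l, dx_is E x y l -> Rabs l <= B) /\
     (forall l, dy_is E x y l -> Rabs l <= B)).

Definition gbound (z x y : R) : R :=
  6 * (x ^ 2 + y ^ 2) / z *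
  exp (- (x ^ 2 + y ^ 2) / 2 + sqrt 2 * z * norm2 x y).

(* Write d_i for the coefficient of the i-th wave term times K(s^i). The interpolation
   conditions say sum d_i = 0 and sum d_i s^i = e (a unit vector); on a right isosceles
   triangle with legs zeta this forces sum |d_i| <= 2/zeta. Since the spike lies in the
   triangle, |s^i| <= sqrt 2 zeta, so K(s^i - t) = K(s^i) exp(-|t|^2/2 + s^i.t) is at most
   K(s^i) exp(-|t|^2/2 + sqrt 2 zeta |t|). Every derivative of order <= 2 of a Gaussian
   term only multiplies it by a polynomial of degree <= 2 in s^i - t, bounded by 3|t|^2
   for |t| >= 10; summing gives g(t). The numerical bound follows from exp 35 > 3 10^13. *)

From Stdlib Require Import Reals Lra Psatz FunctionalExtensionality.
From Coquelicot Require Import Coquelicot.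
Open Scope R_scope.

(* [q] is the polynomial factor produced by differentiating the Gaussian terms:
   [wave] is the case [q = 1], its partial derivatives the cases [u], [v], [u^2-1], [uv], [v^2-1]. *)
Definition wave_with (q : R -> R -> R) (s1 s2 s3 : R * R) (k m r x y : R) : R :=
  k * q (fst s1 - x) (snd s1 - y) * K (fst s1 - x) (snd s1 - y)
  + m * q (fst s2 - x) (snd s2 - y) * K (fst s2 - x) (snd s2 - y)
  + r * q (fst s3 - x) (snd s3 - y) * K (fst s3 - x) (snd s3 - y).

Lemma wave_with_1 s1 s2 s3 k m r x y :
  wave s1 s2 s3 k m r x y = wave_with (fun _ _ => 1) s1 s2 s3 k m r x y.
Proof. unfold wave, wave_with; ring. Qed.

(* [auto_derive] leaves exponentials whose arguments are equal only up to [field]. *)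
Ltac exp_args_by_field :=
  repeat match goal with |- context [exp ?a] => match goal with |- context [exp ?b] =>
    assert_fails (constr_eq a b); replace b with a by field end end.

Ltac partial_tac :=
  unfold dx_is, dy_is; intros; apply is_derive_Reals;
  unfold wave, wave_with, K; cbv beta; auto_derive;
  [repeat split | exp_args_by_field; field].

Lemma dx_wave s1 s2 s3 k m r x y :
  dx_is (wave s1 s2 s3 k m r) x y (wave_with (fun u _ => u) s1 s2 s3 k m r x y).
Proof. partial_tac. Qed.
Lemma dy_wave s1 s2 s3 k m r x y :
  dy_is (wave s1 s2 s3 k m r) x y (wave_with (fun _ v => v) s1 s2 s3 k m r x y).
Proof. partial_tac. Qed.
Lemma dxx_wave s1 s2 s3 k m r x y :
  dx_is (wave_with (fun u _ => u) s1 s2 s3 k m r) x y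
        (wave_with (fun u _ => u ^ 2 - 1) s1 s2 s3 k m r x y).
Proof. partial_tac. Qed.
Lemma dxy_wave s1 s2 s3 k m r x y :
  dy_is (wave_with (fun u _ => u) s1 s2 s3 k m r) x y
        (wave_with (fun u v => u * v) s1 s2 s3 k m r x y).
Proof. partial_tac. Qed.
Lemma dyx_wave s1 s2 s3 k m r x y :
  dx_is (wave_with (fun _ v => v) s1 s2 s3 k m r) x y
        (wave_with (fun u v => u * v) s1 s2 s3 k m r x y).
Proof. partial_tac. Qed.
Lemma dyy_wave s1 s2 s3 k m r x y :
  dy_is (wave_with (fun _ v => v) s1 s2 s3 k m r) x y
        (wave_with (fun _ v => v ^ 2 - 1) s1 s2 s3 k m r x y).
Proof. partial_tac. Qed.

Lemma partial_x_ext (f D F : R -> R -> R) :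
  (forall a b, dx_is f a b (D a b)) -> (forall a b, dx_is f a b (F a b)) -> D = F.
Proof.
  intros HD HF; do 2 (apply functional_extensionality; intro).
  exact (uniqueness_limite _ _ _ _ (HD _ _) (HF _ _)).
Qed.

Lemma partial_y_ext (f D F : R -> R -> R) :
  (forall a b, dy_is f a b (D a b)) -> (forall a b, dy_is f a b (F a b)) -> D = F.
Proof.
  intros HD HF; do 2 (apply functional_extensionality; intro).
  exact (uniqueness_limite _ _ _ _ (HD _ _) (HF _ _)).
Qed.

Lemma bounded_C2_at_intro (f fx fy : R -> R -> R) x y B lxx lxy lyx lyy :
  (forall a b, dx_is f a b (fx a b)) -> (forall a b, dy_is f a b (fy a b)) ->
  dx_is fx x y lxx -> dy_is fx x y lxy -> dx_is fy x y lyx -> dy_is fy x y lyy ->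
  Rabs (f x y) <= B -> Rabs (fx x y) <= B -> Rabs (fy x y) <= B ->
  Rabs lxx <= B -> Rabs lxy <= B -> Rabs lyx <= B -> Rabs lyy <= B ->
  bounded_C2_at f x y B.
Proof.
  intros Dx Dy Dxx Dxy Dyx Dyy B0 Bx By Bxx Bxy Byx Byy.
  split; [exact B0 | split; [| split; [| split]]].
  - intros l Hl; now rewrite (uniqueness_limite _ _ _ _ Hl (Dx x y)).
  - intros l Hl; now rewrite (uniqueness_limite _ _ _ _ Hl (Dy x y)).
  - intros D HD; rewrite (partial_x_ext f D fx HD Dx); split; intros l Hl.
    + now rewrite (uniqueness_limite _ _ _ _ Hl Dxx).
    + now rewrite (uniqueness_limite _ _ _ _ Hl Dxy).
  - intros E HE; rewrite (partial_y_ext f E fy HE Dy); split; intros l Hl.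
    + now rewrite (uniqueness_limite _ _ _ _ Hl Dyx).
    + now rewrite (uniqueness_limite _ _ _ _ Hl Dyy).
Qed.

Definition near_origin (z : R) (s : R * R) : Prop := fst s ^ 2 + snd s ^ 2 <= 2 * z ^ 2.

Definition weight_mass (s1 s2 s3 : R * R) (k m r : R) : R :=
  Rabs (k * K (fst s1) (snd s1)) + Rabs (m * K (fst s2) (snd s2))
  + Rabs (r * K (fst s3) (snd s3)).

Lemma in_triangle_swap12 p a b c : in_triangle p a b c -> in_triangle p b a c.
Proof. intros (l1 & l2 & l3 & H). exists l2, l1, l3; lra. Qed.

Lemma in_triangle_swap23 p a b c : in_triangle p a b c -> in_triangle p a c b.
Proof. intros (l1 & l2 & l3 & H). exists l1, l3, l2; lra. Qed.

(* [pt] lets data attached to the samples (e.g. their weights) be permuted along with them. *)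
Lemma nearest_samples_wlog {A : Type} (pt : A -> R * R) z t (a1 a2 a3 : A)
    (P : A -> A -> A -> Prop) :
  (forall a b c, P a b c -> P b a c) -> (forall a b c, P a b c -> P a c b) ->
  (forall a b c, right_tri z (pt a) (pt b) (pt c) ->
     in_triangle t (pt a) (pt b) (pt c) -> P a b c) ->
  nearest_samples z t (pt a1) (pt a2) (pt a3) -> P a1 a2 a3.
Proof.
  intros P12 P23 Hbase [Ht Hin].
  pose proof (in_triangle_swap12 _ _ _ _ Hin) as H213.
  pose proof (in_triangle_swap23 _ _ _ _ Hin) as H132.
  pose proof (in_triangle_swap23 _ _ _ _ H213) as H231.
  pose proof (in_triangle_swap12 _ _ _ _ H132) as H312.
  pose proof (in_triangle_swap12 _ _ _ _ H231) as H321.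
  destruct Ht as [Ht | [Ht | [Ht | [Ht | [Ht | Ht]]]]].
  - now apply Hbase.
  - now apply P23, Hbase.
  - now apply P12, Hbase.
  - now apply P12, P23, Hbase.
  - now apply P23, P12, Hbase.
  - now apply P12, P23, P12, Hbase.
Qed.

Lemma right_tri_origin_close z c h v :
  0 < z -> right_tri z c h v -> in_triangle (0, 0) c h v ->
  near_origin z c /\ near_origin z h /\ near_origin z v.
Proof.
  intros Hz (e1 & e2 & He1 & He2 & -> & ->) (l1 & l2 & l3 & H1 & H2 & H3 & H4 & Hx & Hy).
  unfold near_origin; destruct c as [cx cy]; simpl in *.
  assert (Ex : cx = - (l2 * e1 * z)) by nra.
  assert (Ey : cy = - (l3 * e2 * z)) by nra.
  rewrite Ex, Ey.
  assert (l2 ^ 2 <= 1 /\ l3 ^ 2 <= 1 /\ (1 - l2) ^ 2 <= 1 /\ (1 - l3) ^ 2 <= 1)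
    as (P1 & P2 & P3 & P4) by (repeat split; nra).
  assert (0 <= z ^ 2) by nra.
  destruct He1, He2; subst e1 e2; repeat split; nra.
Qed.

Lemma nearest_samples_origin_close z s1 s2 s3 :
  0 < z -> nearest_samples z (0, 0) s1 s2 s3 ->
  near_origin z s1 /\ near_origin z s2 /\ near_origin z s3.
Proof.
  intros Hz.
  apply (nearest_samples_wlog (fun p => p) z (0, 0) s1 s2 s3
           (fun a b c => near_origin z a /\ near_origin z b /\ near_origin z c)).
  - tauto.
  - tauto.
  - intros a b c; exact (right_tri_origin_close z a b c Hz).
Qed.

(* The weights at the ends of the legs are read off the moment equations, the weight at
   the right angle from the vanishing sum. *)
Lemma right_tri_weights_bound z c h v dc dh dv ex ey :
  0 < z -> right_tri z c h v -> dc + dh + dv = 0 ->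
  dc * fst c + dh * fst h + dv * fst v = ex ->
  dc * snd c + dh * snd h + dv * snd v = ey ->
  Rabs dc + Rabs dh + Rabs dv <= 2 * (Rabs ex + Rabs ey) / z.
Proof.
  intros Hz (e1 & e2 & He1 & He2 & -> & ->) Hs Hx Hy.
  destruct c as [cx cy]; simpl in *.
  assert (Fx : ex = dh * e1 * z) by nra.
  assert (Fy : ey = dv * e2 * z) by nra.
  assert (abs_sign : forall d e, e = 1 \/ e = -1 -> Rabs (d * e * z) = Rabs d * z).
  { intros d e He; rewrite !Rabs_mult, (Rabs_right z) by lra.
    destruct He as [-> | ->]; [rewrite Rabs_R1 | rewrite (Rabs_left (-1)) by lra]; ring. }
  rewrite Fx, Fy, (abs_sign _ _ He1), (abs_sign _ _ He2).
  replace (2 * (Rabs dh * z + Rabs dv * z) / z) with (2 * (Rabs dh + Rabs dv))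
    by (field; lra).
  replace dc with (- (dh + dv)) by lra; rewrite Rabs_Ropp.
  pose proof (Rabs_triang dh dv); lra.
Qed.

Lemma wave_weights_bound z s1 s2 s3 k m r ex ey :
  0 < z -> nearest_samples z (0, 0) s1 s2 s3 ->
  wave_conds (wave s1 s2 s3 k m r) ex ey -> Rabs ex + Rabs ey = 1 ->
  weight_mass s1 s2 s3 k m r <= 2 / z.
Proof.
  intros Hz Hns (W0 & Wx & Wy) He; unfold weight_mass.
  set (d1 := k * K (fst s1) (snd s1)); set (d2 := m * K (fst s2) (snd s2));
    set (d3 := r * K (fst s3) (snd s3)).
  assert (S0 : d1 + d2 + d3 = 0).
  { unfold wave in W0; rewrite !Rminus_0_r in W0; exact W0. }
  assert (Sx : d1 * fst s1 + d2 * fst s2 + d3 * fst s3 = ex).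
  { rewrite (uniqueness_limite _ _ _ _ Wx (dx_wave s1 s2 s3 k m r 0 0)).
    unfold wave_with; rewrite !Rminus_0_r; unfold d1, d2, d3; ring. }
  assert (Sy : d1 * snd s1 + d2 * snd s2 + d3 * snd s3 = ey).
  { rewrite (uniqueness_limite _ _ _ _ Wy (dy_wave s1 s2 s3 k m r 0 0)).
    unfold wave_with; rewrite !Rminus_0_r; unfold d1, d2, d3; ring. }
  replace (2 / z) with (2 * (Rabs ex + Rabs ey) / z) by (rewrite He; field; lra).
  clear W0 Wx Wy He; clearbody d1 d2 d3.
  revert S0 Sx Sy.
  apply (nearest_samples_wlog fst z (0, 0) (s1, d1) (s2, d2) (s3, d3)
    (fun a b c => snd a + snd b + snd c = 0 ->
       snd a * fst (fst a) + snd b * fst (fst b) + snd c * fst (fst c) = ex ->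
       snd a * snd (fst a) + snd b * snd (fst b) + snd c * snd (fst c) = ey ->
       Rabs (snd a) + Rabs (snd b) + Rabs (snd c) <= 2 * (Rabs ex + Rabs ey) / z));
    [intros [a da] [b db] [c dc]; simpl; intros H ? ? ?;
      pose proof (H ltac:(lra) ltac:(lra) ltac:(lra)); lra ..
    | intros [a da] [b db] [c dc] Ht _; simpl in *;
      exact (right_tri_weights_bound z a b c da db dc ex ey Hz Ht)
    | exact Hns].
Qed.

Lemma exp_le a b : a <= b -> exp a <= exp b.
Proof. intros [H | ->]; [left; now apply exp_increasing | right; reflexivity]. Qed.

Lemma norm2_sq x y : norm2 x y * norm2 x y = x ^ 2 + y ^ 2.
Proof. unfold norm2; apply sqrt_sqrt; nra. Qed.

Lemma K_shift a b x y :
  K (a - x) (b - y) = K a b * exp (- (x ^ 2 + y ^ 2) / 2 + (a * x + b * y)).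
Proof. unfold K; rewrite <- exp_plus; f_equal; field. Qed.

Lemma near_origin_dot_le z a b x y :
  0 < z -> near_origin z (a, b) -> a * x + b * y <= sqrt 2 * z * norm2 x y.
Proof.
  unfold near_origin; simpl; intros Hz Hab.
  pose proof (norm2_sq x y) as Hn; pose proof (sqrt_pos (x ^ 2 + y ^ 2)) as Hn0.
  fold (norm2 x y) in Hn0.
  pose proof (sqrt_sqrt 2 ltac:(lra)) as H2; pose proof (sqrt_pos 2).
  set (s := sqrt 2 * z * norm2 x y).
  assert (Hs0 : 0 <= s) by (unfold s; apply Rmult_le_pos; [apply Rmult_le_pos |]; lra).
  assert (Hss : s * s = 2 * z ^ 2 * (x ^ 2 + y ^ 2)).
  { unfold s; rewrite <- Hn.
    replace (2 * z ^ 2) with (sqrt 2 * sqrt 2 * z ^ 2) by (rewrite H2; ring); ring. }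
  assert (Cauchy_Schwarz : (a * x + b * y) ^ 2 <= (a ^ 2 + b ^ 2) * (x ^ 2 + y ^ 2))
    by (pose proof (pow2_ge_0 (a * y - b * x)); nra).
  assert ((a * x + b * y) ^ 2 <= s * s) by (rewrite Hss; nra).
  nra.
Qed.

Lemma gauss_term_bound z a b c q x y M :
  0 < z -> near_origin z (a, b) -> Rabs q <= M ->
  Rabs (c * q * K (a - x) (b - y))
    <= Rabs (c * K a b) * (M * exp (- (x ^ 2 + y ^ 2) / 2 + sqrt 2 * z * norm2 x y)).
Proof.
  intros Hz Hab Hq; rewrite K_shift.
  replace (c * q * (K a b * exp (- (x ^ 2 + y ^ 2) / 2 + (a * x + b * y))))
    with (c * K a b * (q * exp (- (x ^ 2 + y ^ 2) / 2 + (a * x + b * y)))) by ring.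
  rewrite (Rabs_mult (c * K a b)), (Rabs_mult q), (Rabs_right (exp _)) by (left; apply exp_pos).
  apply Rmult_le_compat_l; [apply Rabs_pos |].
  apply Rmult_le_compat; [apply Rabs_pos | left; apply exp_pos | exact Hq |].
  apply exp_le; pose proof (near_origin_dot_le z a b x y Hz Hab); lra.
Qed.

Lemma wave_with_bound (q : R -> R -> R) z s1 s2 s3 k m r x y :
  0 < z <= 1 -> 10 <= norm2 x y ->
  near_origin z s1 -> near_origin z s2 -> near_origin z s3 ->
  weight_mass s1 s2 s3 k m r <= 2 / z ->
  (forall u v, u ^ 2 + v ^ 2 <= 2 * (x ^ 2 + y ^ 2) + 4 ->
     Rabs (q u v) <= 3 * (x ^ 2 + y ^ 2)) ->
  Rabs (wave_with q s1 s2 s3 k m r x y) <= gbound z x y.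
Proof.
  intros [Hz Hz1] Hn H1 H2 H3 Hw Hq.
  assert (Hshift : forall s : R * R, near_origin z s ->
            (fst s - x) ^ 2 + (snd s - y) ^ 2 <= 2 * (x ^ 2 + y ^ 2) + 4).
  { intros [a b]; unfold near_origin; simpl; intros Hab.
    pose proof (pow2_ge_0 (a + x)); pose proof (pow2_ge_0 (b + y)); nra. }
  set (M := 3 * (x ^ 2 + y ^ 2)).
  set (G := exp (- (x ^ 2 + y ^ 2) / 2 + sqrt 2 * z * norm2 x y)).
  assert (Hterm : forall (s : R * R) c, near_origin z s ->
     Rabs (c * q (fst s - x) (snd s - y) * K (fst s - x) (snd s - y))
       <= Rabs (c * K (fst s) (snd s)) * (M * G)).
  { intros [a b] c Hs; apply gauss_term_bound; [exact Hz | exact Hs |].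
    apply Hq, Hshift, Hs. }
  assert (HMG : 0 <= M * G).
  { unfold M, G; apply Rmult_le_pos; [nra | left; apply exp_pos]. }
  replace (gbound z x y) with (2 / z * (M * G)) by (unfold gbound, M, G; field; lra).
  unfold wave_with, weight_mass in *.
  pose proof (Hterm s1 k H1); pose proof (Hterm s2 m H2); pose proof (Hterm s3 r H3).
  eapply Rle_trans; [apply Rabs_triang |].
  eapply Rle_trans; [apply Rplus_le_compat_r, Rabs_triang |].
  eapply Rle_trans; [| apply Rmult_le_compat_r; [exact HMG | exact Hw]].
  lra.
Qed.

Lemma gauss_factors_bound R0 u v :
  100 <= R0 -> u ^ 2 + v ^ 2 <= 2 * R0 + 4 ->
  Rabs 1 <= 3 * R0 /\ Rabs u <= 3 * R0 /\ Rabs v <= 3 * R0 /\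
  Rabs (u ^ 2 - 1) <= 3 * R0 /\ Rabs (u * v) <= 3 * R0 /\ Rabs (v ^ 2 - 1) <= 3 * R0.
Proof. intros H1 H2; repeat split; unfold Rabs; destruct Rcase_abs; nra. Qed.

Lemma wave_bounded_C2 z s1 s2 s3 k m r x y :
  0 < z <= 1 -> 10 <= norm2 x y ->
  near_origin z s1 -> near_origin z s2 -> near_origin z s3 ->
  weight_mass s1 s2 s3 k m r <= 2 / z ->
  bounded_C2_at (wave s1 s2 s3 k m r) x y (gbound z x y).
Proof.
  intros Hz Hn H1 H2 H3 Hw.
  assert (HR : 100 <= x ^ 2 + y ^ 2) by (rewrite <- norm2_sq; nra).
  pose proof (fun u v => gauss_factors_bound _ u v HR) as Hf.
  apply (bounded_C2_at_intro _ _ _ _ _ _ _ _ _ _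
           (dx_wave s1 s2 s3 k m r) (dy_wave s1 s2 s3 k m r)
           (dxx_wave s1 s2 s3 k m r x y) (dxy_wave s1 s2 s3 k m r x y)
           (dyx_wave s1 s2 s3 k m r x y) (dyy_wave s1 s2 s3 k m r x y));
    try rewrite wave_with_1; apply wave_with_bound; auto;
    intros u v Huv; cbv beta; pose proof (Hf u v Huv); tauto.
Qed.

Lemma exp_nat_mul n a : exp (INR n * a) = exp a ^ n.
Proof.
  induction n as [| n IH].
  - now rewrite Rmult_0_l, exp_0.
  - rewrite S_INR, Rmult_plus_distr_r, Rmult_1_l, exp_plus, IH; simpl; ring.
Qed.

Lemma exp_35_gt : 3 * 10 ^ 13 < exp 35.
Proof.
  assert (E1 : (9 / 8) ^ 8 <= exp 1).
  { replace (exp 1) with (exp (1 / 8) ^ 8)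
      by (rewrite <- exp_nat_mul; f_equal; simpl; lra).
    apply pow_incr; pose proof (exp_ineq1_le (1 / 8)); lra. }
  assert (E2 : (256 / 100) ^ 35 <= exp 35).
  { replace (exp 35) with (exp 1 ^ 35) by (rewrite <- exp_nat_mul; f_equal; simpl; lra).
    apply pow_incr; simpl in E1 |- *; lra. }
  simpl in E2 |- *; lra.
Qed.

(* Writing n = 10 + s, the polynomial factor grows at most like exp (s / 5)
   (from 1 + x <= exp x) while the exponent drops by at least 17 s / 2. *)
Lemma sq_gauss_decay n :
  10 <= n -> n * n * exp (- (n * n) / 2 + 3 / 2 * n) <= 100 * exp (-35).
Proof.
  intros Hn; set (s := n - 10).
  assert (Hlin : n <= 10 * exp (s / 10))
    by (pose proof (exp_ineq1_le (s / 10)); unfold s in *; lra).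
  assert (Hsq : n * n <= 100 * exp (s / 5)).
  { replace (s / 5) with (s / 10 + s / 10) by field; rewrite exp_plus; nra. }
  assert (Hexp : exp (- (n * n) / 2 + 3 / 2 * n) <= exp (-35 - 17 / 2 * s))
    by (apply exp_le; unfold s; nra).
  assert (Hprod : exp (s / 5) * exp (-35 - 17 / 2 * s) <= exp (-35))
    by (rewrite <- exp_plus; apply exp_le; unfold s; lra).
  pose proof (exp_pos (- (n * n) / 2 + 3 / 2 * n)).
  pose proof (exp_pos (s / 5)); pose proof (exp_pos (-35 - 17 / 2 * s)).
  apply Rle_trans with (100 * exp (s / 5) * exp (-35 - 17 / 2 * s)); [| nra].
  apply Rmult_le_compat; nra.
Qed.

Lemma gbound_small z x y :
  1 / 100 <= z <= 1 -> 10 <= norm2 x y -> gbound z x y < 2 / 1000000000.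
Proof.
  intros [Hz1 Hz2] Hn; set (n := norm2 x y) in *.
  unfold gbound; fold n; rewrite <- (norm2_sq x y); fold n.
  pose proof (sqrt_sqrt 2 ltac:(lra)); pose proof (sqrt_pos 2).
  assert (Hsqrt2 : sqrt 2 * z <= 3 / 2) by nra.
  assert (Hinv : 6 / z <= 600).
  { apply (Rmult_le_reg_r z); [lra |]; field_simplify; lra. }
  assert (Hexp : exp (- (n * n) / 2 + sqrt 2 * z * n)
                 <= exp (- (n * n) / 2 + 3 / 2 * n)) by (apply exp_le; nra).
  pose proof (sq_gauss_decay n Hn).
  assert (He35 : exp (-35) * exp 35 = 1) by (rewrite <- exp_plus, <- exp_0; f_equal; lra).
  pose proof exp_35_gt; pose proof (exp_pos (-35)).
  pose proof (exp_pos (- (n * n) / 2 + sqrt 2 * z * n)).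
  replace (6 * (n * n) / z) with (6 / z * (n * n)) by (field; lra).
  apply Rle_lt_trans with (600 * (n * n * exp (- (n * n) / 2 + 3 / 2 * n))).
  - rewrite <- (Rmult_assoc 600).
    assert (0 <= 6 / z) by (unfold Rdiv; apply Rmult_le_pos; [lra | left; apply Rinv_0_lt_compat; lra]).
    apply Rmult_le_compat; nra.
  - nra.
Qed.

Theorem lemmaC6 (z : R) (s1 s2 s3 : R * R) (k1 m1 r1 k2 m2 r2 : R) :
  0 < z <= 1 ->
  nearest_samples z (0, 0) s1 s2 s3 ->
  wave_conds (wave s1 s2 s3 k1 m1 r1) 1 0 ->
  wave_conds (wave s1 s2 s3 k2 m2 r2) 0 1 ->
  (forall x y : R, 10 <= norm2 x y ->
     bounded_C2_at (wave s1 s2 s3 k1 m1 r1) x y (gbound z x y) /\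
     bounded_C2_at (wave s1 s2 s3 k2 m2 r2) x y (gbound z x y)) /\
  (1 / 100 <= z ->
     forall x y : R, 10 <= norm2 x y -> gbound z x y < 2 / 1000000000).
Proof.
  intros Hz Hns Hc1 Hc2.
  destruct (nearest_samples_origin_close z s1 s2 s3 (proj1 Hz) Hns) as (H1 & H2 & H3).
  assert (Hw1 : weight_mass s1 s2 s3 k1 m1 r1 <= 2 / z)
    by (apply (wave_weights_bound z s1 s2 s3 k1 m1 r1 1 0); try tauto;
        rewrite Rabs_R1, Rabs_R0; ring).
  assert (Hw2 : weight_mass s1 s2 s3 k2 m2 r2 <= 2 / z)
    by (apply (wave_weights_bound z s1 s2 s3 k2 m2 r2 0 1); try tauto;
        rewrite Rabs_R1, Rabs_R0; ring).
  split.
  - intros x y Hn; split; apply wave_bounded_C2; assumption.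
  - intros Hz1 x y Hn; apply gbound_small; [lra | exact Hn].
Qed.
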